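(* Let $A\in\mathbb{C}^{n\times n}$ be Hermitian, $\beta>0$, $f(\mathbf{z})=\frac12\mathbf{z}^*A\mathbf{z}+\frac{\beta}{2}\sum_k|z_k|^4$, and let $\mathbf{z}\in\mathbb{CS}^{n-1}$ be a stationary point of $\min_{\mathbf{z}\in\mathbb{CS}^{n-1}}f(\mathbf{z})$. Then $\mathbf{z}$ is a global minimizer of $f$ on $\mathbb{CS}^{n-1}$ if and only if (i) $H_f(\mathbf{z})[\mathbf{v}]\ge0$ and $2H_3(\mathbf{v})^2\le H_f(\mathbf{z})[\mathbf{v}]\cdot[f(\mathbf{v})-f(\mathbf{z})]$ for all $\mathbf{v}\in\mathcal{T}_{\mathbf{z}}\cap\mathbb{CS}^{n-1}$, and (ii) $H_3(\mathbf{v})=0$ and $H_4(\mathbf{v})\ge0$ for all $\mathbf{v}\in\mathcal{T}_{\mathbf{z}}\cap\mathbb{CS}^{n-1}$ with $H_f(\mathbf{z})[\mathbf{v}]=0$.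
   Context: $\mathbb{CS}^{n-1}$ is the unit sphere of $\mathbb{C}^n$. Stationarity means $[A+2\beta\,\mathrm{diag}(|\mathbf{z}|^2)]\mathbf{z}=2\lambda\mathbf{z}$ with $\lambda=\frac12\mathbf{z}^*A\mathbf{z}+\beta\|\mathbf{z}\|_4^4$, where $|\mathbf{z}|^2=(|z_1|^2,\dots,|z_n|^2)$. $\mathcal{T}_{\mathbf{z}}=\{\mathbf{v}\in\mathbb{C}^n:\mathrm{Re}(\mathbf{v}^*\mathbf{z})=0\}$. $H_f(\mathbf{z})[\mathbf{v}]=\mathbf{v}^*[A+2\beta\,\mathrm{diag}(|\mathbf{z}|^2)-2\lambda I]\mathbf{v}+4\beta\sum_k\mathrm{Re}(v_k\bar z_k)^2$, $H_3(\mathbf{v})=\beta\sum_k(|v_k|^2-|z_k|^2)\mathrm{Re}(\bar z_kv_k)$, $H_4(\mathbf{v})=\beta\sum_k[(|v_k|^2-|z_k|^2)^2-4\mathrm{Re}(\bar z_kv_k)^2]$. *)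

From HB Require Import structures.
From mathcomp Require Import all_boot all_order all_algebra.
From mathcomp Require Import complex.
Set Implicit Arguments. Unset Strict Implicit. Unset Printing Implicit Defensive.
Import Order.TTheory GRing.Theory Num.Theory.
Local Open Scope ring_scope.
Local Open Scope complex_scope.

Section Defs.
Variables (R : rcfType) (n : nat).
Implicit Types (A : 'M[R[i]]_n) (z v : 'cV[R[i]]_n).

Definition hermitian_mx A : Prop := map_mx (@conjc R) A^T = A.

Definition qform A v : R[i] := ((map_mx (@conjc R) v^T) *m A *m v) 0 0.

Definition abs2 (x : R[i]) : R := complex.Re x ^+ 2 + complex.Im x ^+ 2.

Definition norm2sq z : R := \sum_k abs2 (z k 0).
Definition norm4p4 z : R := \sum_k abs2 (z k 0) ^+ 2.

Definition on_sphere z : Prop := norm2sq z = 1.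

(* f(z) = 1/2 z^* A z + beta/2 sum |z_k|^4 ; z^*Az is real for Hermitian A,
   so we take its real part to obtain a real-valued f. *)
Definition fobj A (beta : R) z : R := 2^-1 * complex.Re (qform A z) + beta / 2 * norm4p4 z.

Definition lam A (beta : R) z : R := 2^-1 * complex.Re (qform A z) + beta * norm4p4 z.

Definition diag_abs2 z : 'M[R[i]]_n := \matrix_(i, j) ((i == j)%:R * (abs2 (z i 0))%:C).

Definition stationary A (beta : R) z : Prop :=
  (A + (2 * beta)%:C *: diag_abs2 z) *m z = (2 * lam A beta z)%:C *: z.

Definition tangent z v : Prop := complex.Re (\sum_k (v k 0)^* * z k 0) = 0.

Definition Hf A (beta : R) z v : R :=
  complex.Re (qform (A + (2 * beta)%:C *: diag_abs2 z - (2 * lam A beta z)%:C%:M) v)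
  + 4 * beta * \sum_k complex.Re (v k 0 * (z k 0)^*) ^+ 2.

Definition H3 (beta : R) z v : R :=
  beta * \sum_k (abs2 (v k 0) - abs2 (z k 0)) * complex.Re ((z k 0)^* * v k 0).

Definition H4 (beta : R) z v : R :=
  beta * \sum_k ((abs2 (v k 0) - abs2 (z k 0)) ^+ 2 - 4 * complex.Re ((z k 0)^* * v k 0) ^+ 2).

Definition global_min A (beta : R) z : Prop :=
  on_sphere z /\ forall w, on_sphere w -> fobj A beta z <= fobj A beta w.

End Defs.

From Pilot Require Import Defs.
From HB Require Import structures.
From mathcomp Require Import all_boot all_order all_algebra.
From mathcomp Require Import complex.
From mathcomp Require Import ring lra.
Import Order.TTheory GRing.Theory Num.Theory.
Local Open Scope ring_scope.
Local Open Scope complex_scope.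

(* Write a point of the sphere as w = c z + s v with v a unit tangent vector at
   z and c^2 + s^2 = 1.  For a stationary z the terms of f(w) - f(z) that are
   linear in s cancel (by stationarity and tangency), and
     f(w) - f(z) = s^2 (H_f(z)[v]/2 c^2 + 2 H_3(v) c s + (f(v) - f(z)) s^2).
   So z is a global minimizer iff this binary quadratic form is positive
   semidefinite for every unit tangent v, i.e. H_f/2 >= 0, f(v) >= f(z) and
   H_3^2 <= H_f/2 (f(v) - f(z)).  As f(v) - f(z) = (H_f + H_4)/2 on the sphere,
   these are exactly conditions (i) and (ii). *)

Section BinaryForm.
Local Set Implicit Arguments.
Local Unset Strict Implicit.
Variable R : realFieldType.
Implicit Types a b d c s x : R.

Lemma binary_form_ge0 a b d c s : 0 <= a -> 0 <= d -> b ^+ 2 <= a * d ->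
  0 <= a * c ^+ 2 + 2 * b * c * s + d * s ^+ 2.
Proof.
move=> a_ge0 d_ge0 disc.
have [a0|a_neq0] := eqVneq a 0.
  rewrite a0 mul0r in disc.
  have -> : b = 0 by apply/eqP; rewrite -sqrf_eq0 eq_le disc sqr_ge0.
  by rewrite a0 mulr0 !mul0r !add0r mulr_ge0 ?sqr_ge0.
have a_gt0 : 0 < a by rewrite lt_def a_neq0.
rewrite -(pmulr_rge0 _ a_gt0).
have -> : a * (a * c ^+ 2 + 2 * b * c * s + d * s ^+ 2) =
          (a * c + b * s) ^+ 2 + (a * d - b ^+ 2) * s ^+ 2 by ring.
by apply: addr_ge0; rewrite ?sqr_ge0 // mulr_ge0 ?sqr_ge0 ?subr_ge0.
Qed.

Lemma quadratic_ge0P a b d :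
  (forall x, 0 <= a * x ^+ 2 + 2 * b * x + d) <-> [/\ 0 <= a, 0 <= d & b ^+ 2 <= a * d].
Proof.
split=> [q_ge0|[a_ge0 d_ge0 disc] x]; last first.
  by have := binary_form_ge0 x 1 a_ge0 d_ge0 disc; rewrite expr1n !mulr1.
have d_ge0 : 0 <= d by have := q_ge0 0; rewrite expr0n /= !mulr0 !add0r.
have a_ge0 : 0 <= a.
  rewrite leNgt; apply/negP => a_lt0.
  (* x >= 1 and a x + 2|b| + d = a, so q(x) <= x (a x + 2|b| + d) < 0. *)
  pose x := (2 * `|b| + d) / - a + 1.
  have x_ge1 : 1 <= x by rewrite /x lerDr divr_ge0 // -?oppr_ge0; have := normr_ge0 b; lra.
  have ax : a * x = a - (2 * `|b| + d) by rewrite /x; field; rewrite lt_eqF.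
  have bx : b * x <= `|b| * x by rewrite ler_wpM2r ?ler_norm // (le_trans ler01 x_ge1).
  have := q_ge0 x; have : d <= d * x by rewrite ler_peMr.
  nra.
split=> //.
have [a0|a_neq0] := eqVneq a 0.
  rewrite a0 mul0r; have [->|b_neq0] := eqVneq b 0; first by rewrite expr0n.
  have := q_ge0 (- (d + 1) / (2 * b)); rewrite a0 mul0r add0r.
  have -> : 2 * b * (- (d + 1) / (2 * b)) = - (d + 1) by field.
  lra.
have a_gt0 : 0 < a by rewrite lt_def a_neq0.
have := q_ge0 (- b / a).
have -> : a * (- b / a) ^+ 2 + 2 * b * (- b / a) + d = (a * d - b ^+ 2) / a by field.
by rewrite pmulr_lge0 ?invr_gt0 // subr_ge0.
Qed.

Lemma psd_conditionsP (h b d h4 : R) : d = (h + h4) / 2 ->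
  [/\ 0 <= h / 2, 0 <= d & b ^+ 2 <= h / 2 * d] <->
  (0 <= h /\ 2 * b ^+ 2 <= h * d) /\ (h = 0 -> b = 0 /\ 0 <= h4).
Proof.
move=> dE; split=> [[h_ge0 d_ge0 disc]|[[h_ge0 disc] degen]].
  split; first by split; lra.
  move=> h0; rewrite h0 mul0r mul0r in disc; split; last by lra.
  by apply/eqP; rewrite -sqrf_eq0 eq_le disc sqr_ge0.
split; [lra | | lra].
have [h0|h_neq0] := eqVneq h 0; first by have [_] := degen h0; lra.
have h_gt0 : 0 < h by rewrite lt_def h_neq0.
by rewrite -(pmulr_rge0 _ h_gt0); apply: le_trans disc; rewrite mulr_ge0 ?sqr_ge0.
Qed.

End BinaryForm.

Section ComplexScalars.
Local Set Implicit Arguments.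
Local Unset Strict Implicit.
Variable R : rcfType.
Implicit Types (x y : R[i]) (a c s : R).

Definition cdot x y : R := complex.Re (x^* * y).

Lemma cdotC x y : cdot x y = cdot y x.
Proof. by case: x => ? ?; case: y => ? ?; rewrite /cdot /=; ring. Qed.

Lemma cdotZr x y a : cdot x (a%:C * y) = a * cdot x y.
Proof. by case: x => ? ?; case: y => ? ?; rewrite /cdot /=; ring. Qed.

Lemma cdotxx x : cdot x x = abs2 x.
Proof. by case: x => ? ?; rewrite /abs2 /cdot /=; ring. Qed.

Lemma abs2_comb x y c s :
  abs2 (c%:C * x + s%:C * y) = c ^+ 2 * abs2 x + 2 * c * s * cdot x y + s ^+ 2 * abs2 y.
Proof. by case: x => ? ?; case: y => ? ?; rewrite /abs2 /cdot /=; ring. Qed.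

(* [(_)^*] of a sum would parse as [conjc] here, while Defs conjugates with [Num.conj]. *)
Lemma conj_comb x y c s :
  Num.conj (c%:C * x + s%:C * y) = c%:C * Num.conj x + s%:C * Num.conj y.
Proof.
case: x => ? ?; case: y => ? ?; apply/eqP; rewrite eq_complex /=.
by apply/andP; split; apply/eqP; ring.
Qed.

Lemma conj_realM_self x a : Num.conj x * a%:C * x = (a * abs2 x)%:C.
Proof.
case: x => ? ?; apply/eqP; rewrite eq_complex /abs2 /=.
by apply/andP; split; apply/eqP; ring.
Qed.

Lemma Re_addC x a : complex.Re (x + a%:C) = complex.Re x + a.
Proof. by case: x. Qed.

Lemma abs2_mulI x : abs2 ('i * x) = abs2 x.
Proof. by case: x => ? ?; rewrite /abs2 /=; ring. Qed.

Lemma cdot_mulI x : cdot x ('i * x) = 0.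
Proof. by case: x => ? ?; rewrite /cdot /=; ring. Qed.

Lemma abs2_ge0 x : 0 <= abs2 x.
Proof. by rewrite addr_ge0 ?sqr_ge0. Qed.

Lemma abs2_eq0 x : abs2 x = 0 -> x = 0.
Proof.
case: x => a b; rewrite /abs2 /= => ab0; apply/eqP; rewrite eq_complex /=.
by apply/andP; split; apply/eqP; nra.
Qed.

End ComplexScalars.

Section SphereGeometry.
Local Set Implicit Arguments.
Local Unset Strict Implicit.
Variables (R : rcfType) (n : nat).
Implicit Types (A : 'M[R[i]]_n) (x y z v w : 'cV[R[i]]_n) (a c s : R).

Definition sesq A x y : R[i] := \sum_i \sum_j (x i 0)^* * A i j * y j 0.

Definition rdot x y : R := \sum_k cdot (x k 0) (y k 0).

Lemma comb_coord x y c s k :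
  (c%:C *: x + s%:C *: y) k 0 = c%:C * x k 0 + s%:C * y k 0.
Proof. by rewrite !mxE. Qed.

Lemma tangentE z v : tangent z v <-> rdot z v = 0.
Proof.
rewrite /tangent raddf_sum /rdot (eq_bigr (fun k => cdot (z k 0) (v k 0))) //.
by move=> k _; rewrite cdotC.
Qed.

Lemma rdotxx x : rdot x x = norm2sq x.
Proof. by apply: eq_bigr => k _; rewrite cdotxx. Qed.

Lemma rdotZr a x y : rdot x (a%:C *: y) = a * rdot x y.
Proof.
rewrite /rdot mulr_sumr; apply: eq_bigr => k _.
by rewrite mxE cdotZr.
Qed.

Lemma rdot_combr z x y c s :
  rdot z (c%:C *: x + s%:C *: y) = c * rdot z x + s * rdot z y.
Proof.
rewrite /rdot !mulr_sumr -big_split /=; apply: eq_bigr => k _.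
rewrite comb_coord; case: (z k 0) (x k 0) (y k 0) => [? ?] [? ?] [? ?].
by rewrite /cdot /=; ring.
Qed.

Lemma norm2sq_ge0 x : 0 <= norm2sq x.
Proof. by apply: sumr_ge0 => k _; apply: abs2_ge0. Qed.

Lemma norm2sq_eq0 x : norm2sq x = 0 -> x = 0.
Proof.
move=> /(psumr_eq0P (fun k _ => abs2_ge0 _)) x0.
apply/matrixP => k j; rewrite (ord1 j) mxE.
by apply: abs2_eq0; apply: x0.
Qed.

Lemma norm2sqZ a x : norm2sq (a%:C *: x) = a ^+ 2 * norm2sq x.
Proof.
rewrite /norm2sq mulr_sumr; apply: eq_bigr => k _; rewrite mxE.
by case: (x k 0) => ? ?; rewrite /abs2 /=; ring.
Qed.

Lemma norm2sq_comb z v c s : norm2sq (c%:C *: z + s%:C *: v) =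
  c ^+ 2 * norm2sq z + 2 * c * s * rdot z v + s ^+ 2 * norm2sq v.
Proof.
rewrite /norm2sq /rdot !mulr_sumr -!big_split /=; apply: eq_bigr => k _.
by rewrite comb_coord abs2_comb.
Qed.

Lemma norm4p4_comb z v c s : norm4p4 (c%:C *: z + s%:C *: v) =
  c ^+ 4 * norm4p4 z + 4 * c ^+ 3 * s * \sum_k abs2 (z k 0) * cdot (z k 0) (v k 0)
  + 2 * c ^+ 2 * s ^+ 2 * \sum_k abs2 (z k 0) * abs2 (v k 0)
  + 4 * c ^+ 2 * s ^+ 2 * \sum_k cdot (z k 0) (v k 0) ^+ 2
  + 4 * c * s ^+ 3 * \sum_k cdot (z k 0) (v k 0) * abs2 (v k 0) + s ^+ 4 * norm4p4 v.
Proof.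
rewrite /norm4p4 !mulr_sumr -!big_split /=; apply: eq_bigr => k _.
by rewrite comb_coord abs2_comb; ring.
Qed.

Lemma qform_sesq A x : qform A x = sesq A x x.
Proof.
rewrite /qform /sesq mxE exchange_big /=; apply: eq_bigr => j _.
by rewrite !mxE mulr_suml; apply: eq_bigr => i _; rewrite !mxE.
Qed.

Lemma sesq_hermitian A x y : hermitian_mx A -> (sesq A x y)^* = sesq A y x.
Proof.
move=> hA; rewrite /sesq rmorph_sum exchange_big /=; apply: eq_bigr => i _.
rewrite rmorph_sum; apply: eq_bigr => j _.
have <- : (A i j)^* = A j i by rewrite -[in RHS]hA !mxE.
by rewrite !rmorphM /= conjcK; ring.
Qed.

Lemma Re_qform_comb A z v c s : hermitian_mx A ->
  complex.Re (qform A (c%:C *: z + s%:C *: v)) = c ^+ 2 * complex.Re (qform A z)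
    + 2 * c * s * complex.Re (sesq A v z) + s ^+ 2 * complex.Re (qform A v).
Proof.
move=> hA; rewrite !qform_sesq.
have -> : sesq A (c%:C *: z + s%:C *: v) (c%:C *: z + s%:C *: v) =
    (c ^+ 2)%:C * sesq A z z + (c * s)%:C * sesq A z v
    + (c * s)%:C * sesq A v z + (s ^+ 2)%:C * sesq A v v.
  rewrite /sesq !mulr_sumr -!big_split /=; apply: eq_bigr => i _.
  rewrite !mulr_sumr -!big_split /=; apply: eq_bigr => j _.
  by rewrite !comb_coord conj_comb; ring.
rewrite -(sesq_hermitian v z hA).
by case: (sesq A z z) (sesq A v z) (sesq A v v) => [? ?] [? ?] [? ?] /=; ring.
Qed.

Lemma qform_add_diag A x (d : 'I_n -> R) :
  qform (A + \matrix_(i, j) ((i == j)%:R * (d i)%:C)) x =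
  qform A x + (\sum_k d k * abs2 (x k 0))%:C.
Proof.
rewrite !qform_sesq /sesq rmorph_sum -big_split /=; apply: eq_bigr => i _.
rewrite (bigD1 i) // [X in _ = X + _](bigD1 i) //= !mxE eqxx mul1r.
rewrite -conj_realM_self (eq_bigr (fun j => (x i 0)^* * A i j * x j 0)); first by ring.
by move=> j /negbTE ji; rewrite !mxE eq_sym ji mul0r addr0.
Qed.

Lemma stationary_row A beta z i : stationary A beta z ->
  \sum_j A i j * z j 0 = (2 * lam A beta z - 2 * beta * abs2 (z i 0))%:C * z i 0.
Proof.
move=> /(congr1 (fun M : 'cV[R[i]]_n => M i 0)); rewrite !mxE => stat_i.
have <- : \sum_j (A + (2 * beta)%:C *: diag_abs2 z) i j * z j 0
          - (2 * beta * abs2 (z i 0))%:C * z i 0 = \sum_j A i j * z j 0.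
  rewrite (bigD1 i) //= [X in _ = X](bigD1 i) //= !mxE eqxx.
  rewrite (eq_bigr (fun j => A i j * z j 0)); last first.
    by move=> j /negbTE ji; rewrite !mxE eq_sym ji mul0r mulr0 addr0.
  rewrite rmorphM /=; ring.
by rewrite stat_i rmorphB rmorphM /=; ring.
Qed.

Lemma Re_sesq_stationary A beta z v : stationary A beta z ->
  complex.Re (sesq A v z) =
  2 * lam A beta z * rdot z v - 2 * beta * \sum_k abs2 (z k 0) * cdot (z k 0) (v k 0).
Proof.
move=> stat; rewrite /sesq /rdot raddf_sum !mulr_sumr -sumrB; apply: eq_bigr => i _.
rewrite (eq_bigr (fun j => (v i 0)^* * (A i j * z j 0))); last by move=> j _; rewrite mulrA.
rewrite -mulr_sumr (stationary_row i stat) -[LHS]/(cdot (v i 0) (_ * z i 0)) cdotZr cdotC.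
ring.
Qed.

Lemma Hf_expand A beta z v : Hf A beta z v =
  complex.Re (qform A v) + 2 * beta * \sum_k abs2 (z k 0) * abs2 (v k 0)
  - 2 * lam A beta z * norm2sq v + 4 * beta * \sum_k cdot (z k 0) (v k 0) ^+ 2.
Proof.
rewrite /Hf; set d := fun i => 2 * beta * abs2 (z i 0) - 2 * lam A beta z.
have -> : A + (2 * beta)%:C *: diag_abs2 z - (2 * lam A beta z)%:C%:M =
          A + \matrix_(i, j) ((i == j)%:R * (d i)%:C).
  apply/matrixP => i j; rewrite !mxE /d rmorphB rmorphM /=.
  by case: (i == j); rewrite ?mulr1n ?mulr0n; ring.
rewrite qform_add_diag Re_addC /d /norm2sq.
have -> : \sum_k complex.Re (v k 0 * (z k 0)^*) ^+ 2 = \sum_k cdot (z k 0) (v k 0) ^+ 2.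
  by apply: eq_bigr => k _; rewrite mulrC.
rewrite (eq_bigr (fun k => 2 * beta * (abs2 (z k 0) * abs2 (v k 0))
                          - 2 * lam A beta z * abs2 (v k 0))); last by move=> k _; ring.
by rewrite sumrB -!mulr_sumr; ring.
Qed.

Lemma H3_expand beta z v : H3 beta z v = beta *
  (\sum_k cdot (z k 0) (v k 0) * abs2 (v k 0) - \sum_k abs2 (z k 0) * cdot (z k 0) (v k 0)).
Proof. by rewrite /H3 -sumrB; congr (_ * _); apply: eq_bigr => k _; rewrite /cdot; ring. Qed.

Lemma H4_expand beta z v : H4 beta z v = beta * (norm4p4 v + norm4p4 z
  - 2 * \sum_k abs2 (z k 0) * abs2 (v k 0) - 4 * \sum_k cdot (z k 0) (v k 0) ^+ 2).
Proof.
rewrite /H4 /norm4p4; congr (_ * _).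
rewrite -big_split !mulr_sumr -!sumrB /=.
by apply: eq_bigr => k _; rewrite /cdot; ring.
Qed.

Lemma fobj_sub_Hf_H4 A beta z v : on_sphere v ->
  fobj A beta v - fobj A beta z = (Hf A beta z v + H4 beta z v) / 2.
Proof. by move=> v1; rewrite Hf_expand H4_expand v1 /fobj /lam; field. Qed.

Lemma fobj_comb_sub A beta z v c s :
  hermitian_mx A -> stationary A beta z -> tangent z v -> on_sphere v ->
  c ^+ 2 + s ^+ 2 = 1 ->
  fobj A beta (c%:C *: z + s%:C *: v) - fobj A beta z = s ^+ 2 *
    (Hf A beta z v / 2 * c ^+ 2 + 2 * H3 beta z v * c * s
     + (fobj A beta v - fobj A beta z) * s ^+ 2).
Proof.
move=> hA stat /tangentE zv0 v1 cs1.
rewrite {1}/fobj Re_qform_comb // (Re_sesq_stationary _ stat) zv0 norm4p4_comb.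
rewrite Hf_expand H3_expand v1 /fobj /lam.
(* Eliminating c^2 turns the identity into a polynomial one. *)
have c2 : c ^+ 2 = 1 - s ^+ 2 by rewrite -cs1 addrK.
have c3 : c ^+ 3 = c * (1 - s ^+ 2) by rewrite -c2 -exprS.
have c4 : c ^+ 4 = (1 - s ^+ 2) ^+ 2 by rewrite -c2 -exprM.
by rewrite c4 c3 c2; field.
Qed.

Lemma sphere_decomposition z w : on_sphere z -> on_sphere w ->
  exists c s v, [/\ tangent z v, on_sphere v, c ^+ 2 + s ^+ 2 = 1
                  & w = c%:C *: z + s%:C *: v].
Proof.
move=> z1 w1; set c := rdot z w; set u := (- c)%:C *: z + 1%:C *: w.
have zz1 : rdot z z = 1 by rewrite rdotxx.
have zu0 : rdot z u = 0 by rewrite rdot_combr zz1 -/c; ring.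
have u_norm : norm2sq u = 1 - c ^+ 2.
  by rewrite norm2sq_comb z1 w1 -/c; ring.
have w_eq : w = c%:C *: z + u.
  by rewrite /u addrA -scalerDl -rmorphD addrN scale0r add0r scale1r.
set s := Num.sqrt (norm2sq u).
have s2 : s ^+ 2 = norm2sq u by rewrite sqr_sqrtr ?norm2sq_ge0.
have [s0|s_neq0] := eqVneq s 0.
  have u0 : norm2sq u = 0 by rewrite -s2 s0 expr0n.
  exists c, 0, ('i *: z); split.
  - apply/tangentE; rewrite /rdot (eq_bigr (fun _ => 0)) ?big1 // => k _.
    by rewrite mxE cdot_mulI.
  - by rewrite /on_sphere /norm2sq -z1; apply: eq_bigr => k _; rewrite mxE abs2_mulI.
  - by rewrite expr0n /= addr0; lra.
  - by rewrite scale0r addr0 {1}w_eq (norm2sq_eq0 u0) addr0.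
exists c, s, (s^-1%:C *: u); split.
- by apply/tangentE; rewrite rdotZr zu0 mulr0.
- by rewrite /on_sphere norm2sqZ exprVn s2 mulVf // -s2 sqrf_eq0.
- by rewrite s2; lra.
- by rewrite scalerA -rmorphM mulfV // scale1r.
Qed.

Lemma global_min_tangent_psd A beta z v :
  hermitian_mx A -> stationary A beta z -> global_min A beta z ->
  tangent z v -> on_sphere v ->
  [/\ 0 <= Hf A beta z v / 2, 0 <= fobj A beta v - fobj A beta z
     & H3 beta z v ^+ 2 <= Hf A beta z v / 2 * (fobj A beta v - fobj A beta z)].
Proof.
move=> hA stat [z1 zmin] tv v1; apply/quadratic_ge0P => x.
(* Compare z with the point of the great circle through z and v where c / s = x. *)
set r := Num.sqrt (1 + x ^+ 2).
have r2 : r ^+ 2 = 1 + x ^+ 2 by rewrite sqr_sqrtr // addr_ge0 ?sqr_ge0.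
have r_gt0 : 0 < r by rewrite sqrtr_gt0 ltr_wpDr ?sqr_ge0.
have r2_neq0 : 1 + x ^+ 2 != 0 by rewrite -r2 sqrf_eq0 gt_eqF.
have cs1 : (x / r) ^+ 2 + r^-1 ^+ 2 = 1 by rewrite exprMn exprVn r2; field.
have w1 : on_sphere ((x / r)%:C *: z + r^-1%:C *: v).
  by rewrite /on_sphere norm2sq_comb z1 v1 (tangentE _ _).1 // mulr0 addr0 !mulr1.
have := zmin _ w1; rewrite -subr_ge0 fobj_comb_sub //.
set q := (X in _ -> 0 <= X).
have -> : r^-1 ^+ 2 * (Hf A beta z v / 2 * (x / r) ^+ 2 + 2 * H3 beta z v * (x / r) / r
           + (fobj A beta v - fobj A beta z) * r^-1 ^+ 2) = (r ^+ 4)^-1 * q.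
  by rewrite /q; field; rewrite gt_eqF.
by rewrite pmulr_rge0 // invr_gt0 exprn_gt0.
Qed.

Lemma tangent_psd_global_min A beta z :
  hermitian_mx A -> stationary A beta z -> on_sphere z ->
  (forall v, tangent z v -> on_sphere v ->
    [/\ 0 <= Hf A beta z v / 2, 0 <= fobj A beta v - fobj A beta z
       & H3 beta z v ^+ 2 <= Hf A beta z v / 2 * (fobj A beta v - fobj A beta z)]) ->
  global_min A beta z.
Proof.
move=> hA stat z1 psd; split=> // w w1.
have [c [s [v [tv v1 cs1 ->]]]] := sphere_decomposition z1 w1.
have [Hf_ge0 D_ge0 disc] := psd v tv v1.
by rewrite -subr_ge0 fobj_comb_sub // mulr_ge0 ?sqr_ge0 // binary_form_ge0.
Qed.

End SphereGeometry.

Theorem theorem3 (R : rcfType) (n : nat) (A : 'M[R[i]]_n) (beta : R)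
  (z : 'cV[R[i]]_n) :
  hermitian_mx A -> 0 < beta -> on_sphere z -> stationary A beta z ->
  global_min A beta z <->
   (forall v, tangent z v -> on_sphere v ->
       0 <= Hf A beta z v /\
       2 * H3 beta z v ^+ 2 <= Hf A beta z v * (fobj A beta v - fobj A beta z)) /\
   (forall v, tangent z v -> on_sphere v -> Hf A beta z v = 0 ->
       H3 beta z v = 0 /\ 0 <= H4 beta z v).
Proof.
move=> hA _ z1 stat.
have psdE v (v1 : on_sphere v) := psd_conditionsP (H3 beta z v) (fobj_sub_Hf_H4 A beta z v1).
split=> [zmin | [cond_i cond_ii]].
  have conds v tv v1 := (psdE v v1).1 (global_min_tangent_psd hA stat zmin tv v1).
  by split=> v tv v1; have [] := conds v tv v1.
apply: tangent_psd_global_min => // v tv v1.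
by apply/(psdE v v1); split; [apply: cond_i | apply: cond_ii].
Qed.
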